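(* Consider the multi-flow status-update queueing system described in the context with a single server ($M=1$), packet service times exponentially distributed and i.i.d. across time, and packet generation and arrival times synchronized across the $N$ flows. Let $P_1$ be a policy following the preemptive MAF-LGFS discipline and $\pi_1$ a work-conserving causal policy, both operating on the same packet generation/arrival times. Suppose that on a sample path a packet is delivered in $P_1$ and a packet is delivered in $\pi_1$ at the same time $t$. Let $\bm\Delta_{P_1}$ and $\bm\Delta'_{P_1}$ be the age vectors of $P_1$ just before and just after this delivery, and $\bm\Delta_{\pi_1}$, $\bm\Delta'_{\pi_1}$ those of $\pi_1$. If $\Delta_{[i],P_1}\le\Delta_{[i],\pi_1}$ for all $i=1,\ldots,N$, then $\Delta'_{[i],P_1}\le\Delta'_{[i],\pi_1}$ for all $i=1,\ldots,N$.
   Context: System: $N$ flows of update packets are sent through a queue with an infinite buffer and $M$ servers; each server processes one packet at a time. The $i$-th packet of flow $n$ is generated at time $S_{n,i}$, arrives at the queue at time $A_{n,i}$, and is delivered to its destination at time $D_{n,i}$, with $S_{n,i}\le A_{n,i}\le D_{n,i}$ and generation times non-decreasing in $i$. Generation and arrival times are synchronized across flows if there are sequences $\{S_i\}$, $\{A_i\}$ with $S_{n,i}=S_i$, $A_{n,i}=A_i$ for all $n,i$. A policy is work-conserving if the server is busy whenever the queue is non-empty; it is causal if decisions depend only on history and current state. Age of flow $n$: $\Delta_n(t)=t-\max\{S_{n,i}:D_{n,i}\le t\}$; the age vector is $\bm\Delta=(\Delta_1,\ldots,\Delta_N)$, and $\Delta_{[i]}$ denotes its $i$-th largest component. The preemptive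 MAF-LGFS policy serves, among all packets of all flows, the last generated packet from the flow with the maximum age (ties broken arbitrarily), preempting the packet in service when this target changes (preempted packets return to the queue). *)

From HB Require Import structures.
From mathcomp Require Import all_boot all_order all_algebra.
From mathcomp Require Import reals.
Set Implicit Arguments. Unset Strict Implicit. Unset Printing Implicit Defensive.
Import Order.TTheory GRing.Theory Num.Theory.
Local Open Scope ring_scope.

Section Queue.
Variable R : realType.
Variable N : nat.

(* Generation/arrival times are synchronized across flows:
   packet i of every flow is generated at S i and arrives at A i.
   A policy is described by the delivery times of the packets:
   D n i = Some d  : packet i of flow n is delivered at time d,
   D n i = None    : it is never delivered. *)

Definition synchronized (S A : nat -> R) : Prop :=
  (forall i j, (i <= j)%N -> S i <= S j) /\ (forall i, S i <= A i).

(* Single-server (M = 1) sample path: a packet is delivered after its arrival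
   (service times are exponential, hence a.s. positive), and no two packets are
   delivered at the same instant (one server processes one packet at a time). *)
Definition single_server_path (A : nat -> R) (D : 'I_N -> nat -> option R) : Prop :=
  (forall n i d, D n i = Some d -> A i < d) /\
  (forall n i m j d, D n i = Some d -> D m j = Some d -> n = m /\ i = j).

Definition delivered_before (D : 'I_N -> nat -> option R) (n : 'I_N) (i : nat) (t : R) : bool :=
  if D n i is Some d then d < t else false.

Definition delivered_by (D : 'I_N -> nat -> option R) (n : 'I_N) (i : nat) (t : R) : bool :=
  if D n i is Some d then d <= t else false.

Definition age_from (del : nat -> bool) (S : nat -> R) (t x : R) : Prop :=
  exists i, del i /\ x = t - S i /\ (forall j, del j -> S j <= S i).

Definition age_before (D : 'I_N -> nat -> option R) (S : nat -> R) (n : 'I_N) (t x : R) :=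
  age_from (fun i => delivered_before D n i t) S t x.
Definition age_after (D : 'I_N -> nat -> option R) (S : nat -> R) (n : 'I_N) (t x : R) :=
  age_from (fun i => delivered_by D n i t) S t x.

Definition in_system (A : nat -> R) (D : 'I_N -> nat -> option R) (n : 'I_N) (i : nat) (t : R) : bool :=
  (A i < t) && ~~ delivered_before D n i t.

(* The delivery at time t of packet i1 of flow n1 follows the preemptive
   MAF-LGFS discipline: just before t the server serves, among all packets in
   the system, the last generated packet of a flow with maximum age
   (aP = age vector just before t). *)
Definition maf_lgfs_delivery (S A : nat -> R) (D : 'I_N -> nat -> option R)
    (aP : 'I_N -> R) (t : R) (n1 : 'I_N) (i1 : nat) : Prop :=
  D n1 i1 = Some t /\
  (forall m, aP m <= aP n1) /\
  (forall j, in_system A D n1 j t -> S j <= S i1).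

(* k-th largest component of a vector (k = 0 is the largest), i.e. Delta_[k+1]. *)
Definition kth_largest (a : 'I_N -> R) (k : nat) : R :=
  nth 0 (sort (fun x y : R => y <= x) [seq a j | j <- enum 'I_N]) k.

End Queue.

(* Order statistics are compared through level-set counts: the k-th largest
   entries of a are below those of b for every k iff, for every threshold c,
   at most as many entries of a as of b are >= c.  At time t only flow n1 of
   P and flow n2 of pi change age.  In P the flow of maximal age drops to at
   most t - S i2: packet i2 has arrived, so it was either already delivered
   to flow n1 or is waiting there, and then LGFS gives S i2 <= S i1.  In pi
   the age of flow n2 drops to no less than min(old age, t - S i2).  These
   two facts preserve every level-set count inequality. *)

From HB Require Import structures.
From mathcomp Require Import all_boot all_order all_algebra.
From mathcomp Require Import reals.
From mathcomp Require Import zify.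
Set Implicit Arguments. Unset Strict Implicit. Unset Printing Implicit Defensive.
Import Order.TTheory GRing.Theory Num.Theory.
Local Open Scope ring_scope.

Lemma nth_sorted_ge d (T : orderType d) (x0 c : T) (s : seq T) k :
  sorted (fun x y => y <= x)%O s -> (k < size s)%N ->
  (c <= nth x0 s k)%O = (k < count (fun x => c <= x)%O s)%N.
Proof.
move=> s_sorted k_lt; apply/idP/idP => [c_le|]; last exact: (@nth_count_le _ T^d c).
rewrite ltnNge; apply: contraL c_le => count_le.
by rewrite -ltNge; apply: (@nth_count_gt _ T^d c); rewrite ?count_le.
Qed.

Section OrderStatistics.
Variables (R : realType) (N : nat).
Implicit Types (a b : 'I_N -> R) (c : R).

Definition count_ge a c : nat := #|[pred j | c <= a j]|.

Lemma kth_largest_ge a c (k : 'I_N) : (c <= kth_largest a k) = (k < count_ge a c)%N.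
Proof.
rewrite /kth_largest; set s := sort _ _.
have s_perm : perm_eq s [seq a j | j <- enum 'I_N] by rewrite /s perm_sort.
rewrite nth_sorted_ge; last by rewrite (perm_size s_perm) size_map size_enum_ord.
- by rewrite (permP s_perm) count_map enumT -size_filter /count_ge cardE.
- by rewrite /s; apply: sort_sorted => x y; exact: le_total.
Qed.

Lemma kth_largest_leP a b :
  (forall k : 'I_N, kth_largest a k <= kth_largest b k) <->
  (forall c, count_ge a c <= count_ge b c)%N.
Proof.
split=> [kth_le c | count_le k]; last first.
  by rewrite kth_largest_ge (leq_trans _ (count_le _)) // -kth_largest_ge.
rewrite leqNgt; apply/negP => count_lt.
(* The (count_ge a c)-th largest entry is >= c in a but < c in b. *)
have m_gt0 : (0 < count_ge a c)%N by exact: leq_ltn_trans count_lt.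
have k_lt : ((count_ge a c).-1 < N)%N by rewrite prednK // -[N]card_ord max_card.
have : c <= kth_largest b (Ordinal k_lt).
  by rewrite (le_trans _ (kth_le _)) // kth_largest_ge /= prednK.
by rewrite kth_largest_ge /= ltnNge -ltnS prednK // count_lt.
Qed.

Lemma count_ge_update a a' n c : (forall j, j != n -> a' j = a j) ->
  (count_ge a' c + (c <= a n)%R = count_ge a c + (c <= a' n)%R)%N.
Proof.
move=> a'_eq; rewrite /count_ge (cardD1 n) [in RHS](cardD1 n) !inE.
rewrite (@eq_card _ _ [predD1 [pred j | c <= a j] & n]) => [|j].
  by rewrite addnAC [RHS]addnC addnA.
by rewrite !inE; case: eqVneq => // /a'_eq ->.
Qed.

Lemma count_ge_gt_max a n c : (forall j, a j <= a n) -> a n < c -> count_ge a c = 0%N.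
Proof.
move=> a_max an_lt; apply: eq_card0 => j; rewrite !inE.
by apply/negbTE; rewrite -ltNge (le_lt_trans (a_max j)).
Qed.

Lemma count_ge_le_replace_max a a' b b' n m x :
  (forall j, a j <= a n) ->
  (forall j, j != n -> a' j = a j) -> a' n <= a n -> a' n <= x ->
  (forall j, j != m -> b' j = b j) -> Num.min (b m) x <= b' m ->
  (forall c, count_ge a c <= count_ge b c)%N ->
  forall c, (count_ge a' c <= count_ge b' c)%N.
Proof.
move=> a_max a'_eq a'n_le_an a'n_le_x b'_eq b'm_ge count_le c.
have := count_le c; have := count_ge_update c a'_eq; have := count_ge_update c b'_eq.
have [c_le_a'n | a'n_lt_c] := leP c (a' n).
  have b'm_ge_c : (c <= b m) -> c <= b' m.
    by move=> c_le; rewrite (le_trans _ b'm_ge) // le_min c_le (le_trans c_le_a'n).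
  rewrite (le_trans c_le_a'n a'n_le_an).
  by case: (c <= b m) b'm_ge_c => [/(_ isT) ->|]; case: (c <= b' m); lia.
have [c_le_an | an_lt_c] := leP c (a n); first by case: (c <= b m); case: (c <= b' m); lia.
by rewrite (count_ge_gt_max a_max an_lt_c); lia.
Qed.
End OrderStatistics.

Section Ages.
Variables (R : realType) (N : nat) (S A : nat -> R) (D : 'I_N -> nat -> option R) (t : R).

Lemma le_age_from (p q : pred nat) x y :
  subpred p q -> age_from p S t x -> age_from q S t y -> y <= x.
Proof.
move=> sub_pq [i [p_i [-> _]]] [k [_ [-> q_max]]].
by rewrite lerD2l lerN2 q_max // sub_pq.
Qed.

Lemma age_from_le (q : pred nat) y j : age_from q S t y -> q j -> y <= t - S j.
Proof. by move=> [k [_ [-> q_max]]] q_j; rewrite lerD2l lerN2 q_max. Qed.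

Lemma delivered_before_by n j : delivered_before D n j t -> delivered_by D n j t.
Proof. by rewrite /delivered_before /delivered_by; case: (D n j) => // d /ltW. Qed.

Lemma delivered_by_before n j :
  D n j != Some t -> delivered_by D n j t -> delivered_before D n j t.
Proof.
rewrite /delivered_before /delivered_by; case: (D n j) => // d d_neq d_le.
by rewrite lt_neqAle d_le andbT; apply: contraNneq d_neq => ->.
Qed.

Lemma age_after_le_before n x y :
  age_before D S n t x -> age_after D S n t y -> y <= x.
Proof. by move=> age_x age_y; apply: le_age_from age_x age_y => j /delivered_before_by. Qed.

Hypothesis D_single : single_server_path A D.

Lemma age_after_eq_before n n' i x y : D n' i = Some t -> n != n' ->
  age_before D S n t x -> age_after D S n t y -> y = x.
Proof.
move=> D_n'i n_neq age_x age_y; apply/eqP; rewrite eq_le (age_after_le_before age_x age_y).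
apply: le_age_from age_y age_x => j; apply: delivered_by_before; apply: contra n_neq.
by move=> /eqP D_nj; have [-> _] := D_single.2 _ _ _ _ _ D_nj D_n'i.
Qed.

Lemma age_after_ge_min n i x y : D n i = Some t ->
  age_before D S n t x -> age_after D S n t y -> Num.min x (t - S i) <= y.
Proof.
move=> D_ni age_x [k [k_del [-> _]]]; move: k_del; rewrite /delivered_by.
case D_nk: (D n k) => [d|] //; rewrite le_eqVlt => /orP[/eqP d_t | d_lt].
  rewrite d_t in D_nk; have [_ ->] := D_single.2 _ _ _ _ _ D_nk D_ni.
  by rewrite ge_min lexx orbT.
by rewrite ge_min (age_from_le age_x) // /delivered_before D_nk.
Qed.

Lemma maf_lgfs_age_after_le aP n i y j : maf_lgfs_delivery S A D aP t n i ->
  age_after D S n t y -> A j < t -> y <= t - S j.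
Proof.
move=> [D_ni [_ lgfs]] age_y A_j_lt.
have [j_del | j_undel] := boolP (delivered_before D n j t).
  by apply: age_from_le age_y _; exact: delivered_before_by.
apply: (le_trans (age_from_le (j := i) age_y _)); first by rewrite /delivered_by D_ni.
by rewrite lerD2l lerN2 lgfs // /in_system A_j_lt j_undel.
Qed.
End Ages.

Theorem lemma2 (R : realType) (N : nat) (S A : nat -> R)
    (DP Dpi : 'I_N -> nat -> option R) (t : R)
    (n1 : 'I_N) (i1 : nat) (n2 : 'I_N) (i2 : nat)
    (aP aP' api api' : 'I_N -> R) :
  synchronized S A ->
  single_server_path A DP ->
  single_server_path A Dpi ->
  (forall n, age_before DP S n t (aP n)) ->
  (forall n, age_after DP S n t (aP' n)) ->
  (forall n, age_before Dpi S n t (api n)) ->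
  (forall n, age_after Dpi S n t (api' n)) ->
  maf_lgfs_delivery S A DP aP t n1 i1 ->
  Dpi n2 i2 = Some t ->
  (forall i : 'I_N, kth_largest aP i <= kth_largest api i) ->
  forall i : 'I_N, kth_largest aP' i <= kth_largest api' i.
Proof.
(* Synchronization is built into the shared S and A. *)
move=> _ P_single pi_single aP_def aP'_def api_def api'_def maf pi_t.
have [P_t [aP_max _]] := maf.
move=> /kth_largest_leP count_le; apply/kth_largest_leP.
apply: (count_ge_le_replace_max (m := n2) (x := t - S i2) aP_max _ _ _ _ _ count_le).
- move=> j j_neq; exact: (age_after_eq_before P_single P_t j_neq (aP_def j) (aP'_def j)).
- exact: (age_after_le_before (aP_def n1) (aP'_def n1)).
- by apply: maf_lgfs_age_after_le maf (aP'_def n1) _; exact: pi_single.1 _ _ _ pi_t.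
- move=> j j_neq; exact: (age_after_eq_before pi_single pi_t j_neq (api_def j) (api'_def j)).
- exact: (age_after_ge_min pi_single pi_t (api_def n2) (api'_def n2)).
Qed.
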